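(* For all integers $n,f,k$ with $1\le f\le n-1$ and $1\le k\le n$, the task $(k+1)\text{-TAg}(n+1,f)$ is $C^*$-reducible to $k\text{-TAg}(n,f)$. Specifically, with $\Pi=\{1,\dots,n+1\}$ and $\Pi_i=\Pi\setminus\{i\}$, the following algorithm solves $(k+1)\text{-TAg}(\Pi,f)$ using the oracles $\mathcal O.k\text{-TAg}(\Pi_l,f)$, $l=1,\dots,n+1$: each process $i$, for $l=1,\dots,n+1$ with $l\ne i$ in this order, queries $\mathcal O.k\text{-TAg}(\Pi_l,f)$ with its initial value $v_i$, receives answer $w_l$ and sends $(l,w_l)$ to all; it then waits until it knows $w_l$ for all $l\in\{1,\dots,n+1\}$ and decides $\max_l w_l$.
   Context: Model: a finite set of processes runs an asynchronous algorithm communicating by reliable message passing with unbounded delays and speeds; processes fail only by crashing. Time is $\mathcal T=\mathbb N$; a failure pattern $F$ for $\Pi$ is a nondecreasing map $\mathcal T\to2^\Pi$, $Faulty(F)=\bigcup_tF(t)$. A binary agreement problem $P$ for $\Pi$ maps each $(F,\vec V)$, $\vec V\in\{0,1\}^\Pi$, to a nonempty $P(F,\vec V)\subseteq\{0,1\}$; a task is $T=(P,f)$. An algorithm solves $T$ if in every run with $|Faulty(F)|\le f$ and initial values $\vec V$: every correct process eventually decides, decisions are irrevocable, no two processes decide differently, and decisions lie in $P(F,\vec V)$. $k\text{-TAg}_\Pi(F,\vec V)=\{0\}$ if at least $k$ entries of $\vec V$ are $0$; $=\{1\}$ if $\vec V$ is all-ones and $|Faulty(F)|\le k-1$; $=\{0,1\}$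 otherwise; $k\text{-TAg}(\Pi,f)=(k\text{-TAg}_\Pi,f)$; $k\text{-TAg}(n,f)=k\text{-TAg}(\{1,\dots,n\},f)$. Oracles: for $T=(P,f)$ on process set $\Pi'$, $\mathcal O.T$ is a black box with consultants $\Pi'$; its history is a sequence of successive consultations, in each of which every consultant may submit at most one query in $\{0,1\}$ and the oracle returns a common response $d$ with $d\in P(F,\vec V)$ for every $\vec V$ extending the partial query vector (the oracle may use the whole failure pattern restricted to $\Pi'$, including future crashes), and every correct querier gets the response whenever at least $|\Pi'|-f$ consultants query; $\mathcal O.T$ is the most general such oracle. $C^*$-reduction: $T_1\le_{C^*}T_2$ if there is an algorithm solving $T_1$ whose processes may additionally consult any finite collection of oracles $\mathcal O.T_2^{(j)}$, each $T_2^{(j)}$ being a copy of $T_2$ whose processes are renamed into (a subset of) the processes of $T_1$. *)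

From mathcomp Require Import all_boot.
Set Implicit Arguments. Unset Strict Implicit. Unset Printing Implicit Defensive.

(* Processes Pi = {1,...,n+1} are represented by 'I_n.+1 (process i <-> ordinal i-1).
   Binary values: false = 0, true = 1.  Time = nat. *)

Section Model.
Variable n : nat.
Notation P := 'I_n.+1.

Definition correct (F : nat -> {set P}) (p : P) : Prop := forall t, p \notin F t.

(* Membership of b in k-TAg_Pi(F, W) for a sub-system Pi (only entries of W in Pi,
   and the failure pattern restricted to Pi, matter).
   |Faulty(F|Pi)| <= k-1 is written: forall t, #|F t :&: Pi| < k
   (equivalent, F being nondecreasing on a finite set). *)
Definition kTAg (k : nat) (Pi : {set P}) (F : nat -> {set P}) (W : P -> bool)
    (b : bool) : Prop :=
  (k <= #|[set q in Pi | ~~ W q]| -> b = false) /\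
  (#|[set q in Pi | ~~ W q]| < k ->
     (forall q, q \in Pi -> W q) ->
     (forall t, #|F t :&: Pi| < k) -> b = true).

(* Global configuration of the algorithm. Oracle l (l : P) is O.k-TAg(Pi_l, f),
   Pi_l = Pi \ {l}. *)
Record config := Config {
  c_next  : P -> nat;               (* next oracle index of the loop l = 0..n *)
  c_wait  : P -> bool;              (* waiting for the response of oracle c_next *)
  c_know  : P -> P -> option bool;  (* c_know p l = Some w : p knows w_l = w *)
  c_ans   : P -> P -> option bool;  (* c_ans p l : response of oracle l received by p *)
  c_dec   : P -> option bool;
  c_query : P -> P -> option bool;  (* c_query l q : query submitted by q to oracle l *)
  c_sent  : {set P * P * bool}      (* messages (dest, l, w_l) sent so far *)
}.

Definition init : config :=
  Config (fun _ => 0) (fun _ => false) (fun _ _ => None) (fun _ _ => None)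
         (fun _ => None) (fun _ _ => None) set0.

Definition upd (A : eqType) (B : Type) (g : A -> B) (a : A) (b : B) : A -> B :=
  fun x => if x == a then b else g x.

(* One atomic step of process p: receive the messages R (those sent to p so far),
   then either receive the pending oracle response (if oa) or issue the next query,
   then decide if the loop is over and all w_l are known.
   V : initial values; d l : the (common) response of oracle l in this run. *)
Definition step (V : P -> bool) (d : P -> bool) (c : config) (p : P)
    (R : {set P * P * bool}) (oa : bool) : config :=
  let RS := R :&: c_sent c in
  let know1 := fun l => match c_know c p l with
                        | Some w => Some w
                        | None => if (p, l, true) \in RS then Some true
                                  else if (p, l, false) \in RS then Some false
                                  else None end in
  let l : P := inord (c_next c p) in
  let '(nx, wt, kn, an, qu, se) :=
    if c_wait c p then
      if oa then
        ((c_next c p).+1, false, upd know1 l (Some (d l)),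
         upd (c_ans c p) l (Some (d l)), c_query c,
         c_sent c :|: [set (q, l, d l) | q : P])
      else (c_next c p, true, know1, c_ans c p, c_query c, c_sent c)
    else if c_next c p < n.+1 then
      if c_next c p == p :> nat then
        ((c_next c p).+1, false, know1, c_ans c p, c_query c, c_sent c)
      else
        (c_next c p, true, know1, c_ans c p,
         upd (c_query c) l (upd (c_query c l) p (Some (V p))), c_sent c)
    else (c_next c p, false, know1, c_ans c p, c_query c, c_sent c) in
  let dc :=
    if [&& ~~ wt, n.+1 <= nx, [forall l', kn l' != None] & c_dec c p == None]
    then Some [exists l', kn l' == Some true]   (* = max_l w_l *)
    else c_dec c p in
  Config (upd (c_next c) p nx) (upd (c_wait c) p wt) (upd (c_know c) p kn)
         (upd (c_ans c) p an) (upd (c_dec c) p dc) qu se.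

(* A run of the algorithm with the oracles O.k-TAg(Pi_l, f), l : P.
   sched t = Some p : p takes a step at time t (receiving the messages rcv t, and
   the pending oracle response if oans t). *)
Definition run (f k : nat) (V : P -> bool) (F : nat -> {set P}) (d : P -> bool)
    (sched : nat -> option P) (rcv : nat -> {set P * P * bool})
    (oans : nat -> bool) (conf : nat -> config) : Prop :=
  (forall t, F t \subset F t.+1) /\
  conf 0 = init /\
  (forall t, conf t.+1 = match sched t with
                            | Some p => step V d (conf t) p (rcv t) (oans t)
                            | None => conf t end) /\
  (forall t p, sched t = Some p -> p \notin F t) /\
  (forall p, correct F p -> forall t, exists2 t', t <= t' & sched t' = Some p) /\
  (forall p l w t, correct F p -> (p, l, w) \in c_sent (conf t) ->
     exists2 t', t <= t' & sched t' = Some p /\ (p, l, w) \in rcv t') /\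
      (* oracle liveness: if at least |Pi_l| - f = n - f consultants query
         oracle l, every correct querier gets the response *)
      (forall p t, correct F p -> c_wait (conf t) p ->
         (exists t0, n - f <= #|[set q | c_query (conf t0) (inord (c_next (conf t) p)) q
                                         != None]|) ->
         exists2 t', t <= t' & sched t' = Some p /\ oans t') /\
      (* oracle safety: the common response d l of oracle l, once given, lies in
         k-TAg_{Pi_l}(F|Pi_l, W) for every W extending the (partial) query vector *)
      (forall l, (exists t p, c_ans (conf t) p l != None) ->
         forall W : P -> bool,
           (forall q t b, c_query (conf t) l q = Some b -> W q = b) ->
           kTAg k [set~ l] F W (d l)).

Definition solves_in_run (k' : nat) (V : P -> bool) (F : nat -> {set P})
    (conf : nat -> config) : Prop :=
  [/\
      forall p, correct F p -> exists t, c_dec (conf t) p != None,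
      forall p t b, c_dec (conf t) p = Some b -> c_dec (conf t.+1) p = Some b,
      forall p q t t' b b', c_dec (conf t) p = Some b -> c_dec (conf t') q = Some b' ->
        b = b' &
      forall p t b, c_dec (conf t) p = Some b -> kTAg k' [set: P] F V b].

End Model.

From mathcomp Require Import all_boot zify.
From Stdlib Require Import Classical.
Set Implicit Arguments. Unset Strict Implicit. Unset Printing Implicit Defensive.

(* Process [p] never consults oracle [l = p], and all other processes do, so the answer
   [w_l] of oracle [l] is a valid [k]-TAg value for the inputs of [Pi \ {l}].  Their
   maximum is then a valid [(k+1)]-TAg value for [Pi]: if [k+1] inputs are [0], each
   [Pi \ {l}] still holds [k] zeros, so every [w_l] is [0]; if all inputs are [1] and at
   most [k] processes crash, removing a crashed [l] (any [l] if none crashes) leaves at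
   most [k-1] of them in [Pi \ {l}], so [w_l = 1].  Agreement holds since everybody
   decides the maximum of the same common answers.  For termination, once all correct
   processes have reached round [l], oracle [l] has been queried by all correct processes
   except [l], that is by at least [n - f] of them, so it answers; hence every correct
   process completes its loop, and since [f <= n - 1] some other correct process relays
   [w_p] to [p]. *)

Lemma upd_same (A : eqType) B (g : A -> B) a b : upd g a b a = b.
Proof. by rewrite /upd eqxx. Qed.

Lemma upd_other (A : eqType) B (g : A -> B) a b x : x != a -> upd g a b x = g x.
Proof. by rewrite /upd => /negbTE ->. Qed.

Lemma upd_Some_neq_None (A B : eqType) (g : A -> option B) a b x :
  g x != None -> upd g a (Some b) x != None.
Proof. by rewrite /upd; case: ifP. Qed.

Lemma leq_cardsD1 (T : finType) (A : {set T}) x : #|A| <= #|A :\ x|.+1.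
Proof. by rewrite (cardsD1 x A); case: (x \in A). Qed.

Lemma monotone_eventually_forall (T : finType) (Q : nat -> T -> Prop) :
  (forall t t' x, t <= t' -> Q t x -> Q t' x) -> (forall x, exists t, Q t x) ->
  exists t, forall x, Q t x.
Proof.
move=> Qmono Qev.
suff [t Ht] : exists t, forall x, x \in enum T -> Q t x.
  by exists t => x; apply: Ht; rewrite mem_enum.
elim: (enum T) => [|a s [t IH]]; first by exists 0.
have [ta Ha] := Qev a; exists (maxn t ta) => x; rewrite inE => /orP [/eqP ->|Hx].
  by apply: Qmono Ha; rewrite leq_maxr.
by apply: Qmono (IH x Hx); rewrite leq_maxl.
Qed.

Section KTAgRemoval.
Variables (n k : nat) (F : nat -> {set 'I_n.+1}) (V : 'I_n.+1 -> bool).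
Hypothesis k_gt0 : 0 < k.
Hypothesis F_mono : forall t t', t <= t' -> F t \subset F t'.

Lemma zeros_removal (l : 'I_n.+1) :
  k < #|[set q in [set: 'I_n.+1] | ~~ V q]| -> k <= #|[set q in [set~ l] | ~~ V q]|.
Proof.
set Z := [set q in _ | _] => kZ.
have -> : [set q in [set~ l] | ~~ V q] = Z :\ l by apply/setP => q; rewrite !inE.
by rewrite -ltnS (leq_trans kZ) ?leq_cardsD1.
Qed.

Lemma faulty_removal :
  (forall t, #|F t :&: [set: 'I_n.+1]| < k.+1) ->
  exists l : 'I_n.+1, forall t, #|F t :&: [set~ l]| < k.
Proof.
move=> Fk; case: (classic (exists t0 l, l \in F t0)) => [[t0 [l Hl]]|none].
  exists l => t; set t1 := maxn t t0.
  have sub : F t :&: [set~ l] \subset F t1 :\ l.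
    apply/subsetP => q; rewrite !inE => /andP [Hq ->] /=.
    exact: subsetP (F_mono (leq_maxl t t0)) _ Hq.
  have Hl1 : l \in F t1 := subsetP (F_mono (leq_maxr t t0)) _ Hl.
  have := Fk t1; rewrite setIT (cardsD1 l) Hl1 ltnS add1n.
  exact: leq_ltn_trans (subset_leq_card sub).
exists ord0 => t; suff -> : F t :&: [set~ ord0] = set0 by rewrite cards0.
apply/setP => q; rewrite !inE; case: (boolP (q \in F t)) => // Hq.
by case: none; exists t, q.
Qed.

Lemma kTAg_max_of_removals (d : 'I_n.+1 -> bool) :
  (forall l, kTAg k [set~ l] F V (d l)) -> kTAg k.+1 [set: 'I_n.+1] F V [exists l, d l].
Proof.
move=> dl; split.
  move=> kZ; apply/negbTE/existsP => -[l].
  by rewrite ((dl l).1 (zeros_removal l kZ)).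
move=> _ ones Fk; have [l Hl] := faulty_removal Fk.
apply/existsP; exists l; apply: (dl l).2 => // [|q _]; last exact: ones.
suff -> : [set q in [set~ l] | ~~ V q] = set0 by rewrite cards0.
by apply/setP => q; rewrite !inE ones ?andbF.
Qed.
End KTAgRemoval.

Definition answered n (ans : 'I_n.+1 -> 'I_n.+1 -> option bool) (l : 'I_n.+1) : Prop :=
  exists q, ans q l != None.

Lemma answered_upd n (ans : 'I_n.+1 -> 'I_n.+1 -> option bool) p an l :
  (forall l w, ans p l = Some w -> an l = Some w) ->
  answered ans l -> answered (upd ans p an) l.
Proof.
move=> ext [q Hq]; case: (eqVneq q p) => [Eq|qp]; last by exists q; rewrite upd_other.
exists p; rewrite upd_same; move: Hq; rewrite Eq.
by case E: (ans p l) => [w|] //; rewrite (ext _ _ E).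
Qed.

Section Step.
Variables (n : nat) (V d : 'I_n.+1 -> bool).
Notation P := 'I_n.+1.

Definition received_knowledge (c : config n) (p : P) (R : {set P * P * bool}) :
    P -> option bool :=
  fun l => match c_know c p l with
           | Some w => Some w
           | None => if (p, l, true) \in R :&: c_sent c then Some true
                     else if (p, l, false) \in R :&: c_sent c then Some false
                     else None end.

(* [step] ends by applying [step_with] to the outcome of its oracle phase; [oracle_phase]
   lists the five possible outcomes, so that [stepP] replaces unfolding [step]. *)
Definition step_with (c : config n) (p : P) nx wt (kn an : P -> option bool) qu se :=
  Config (upd (c_next c) p nx) (upd (c_wait c) p wt) (upd (c_know c) p kn)
    (upd (c_ans c) p an)
    (upd (c_dec c) p
       (if [&& ~~ wt, n.+1 <= nx, [forall l', kn l' != None] & c_dec c p == None]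
        then Some [exists l', kn l' == Some true] else c_dec c p)) qu se.

Inductive oracle_phase (c : config n) (p : P) R (oa : bool) :
  nat -> bool -> (P -> option bool) -> (P -> option bool) -> (P -> P -> option bool) ->
  {set P * P * bool} -> Prop :=
| PhaseResponse : c_wait c p -> oa ->
   let l := inord (c_next c p) in
   oracle_phase c p R oa (c_next c p).+1 false
     (upd (received_knowledge c p R) l (Some (d l))) (upd (c_ans c p) l (Some (d l)))
     (c_query c) (c_sent c :|: [set (q, l, d l) | q : P])
| PhasePending : c_wait c p -> ~~ oa ->
   oracle_phase c p R oa (c_next c p) true (received_knowledge c p R) (c_ans c p)
     (c_query c) (c_sent c)
| PhaseSkipOwn : ~~ c_wait c p -> c_next c p < n.+1 -> c_next c p = p ->
   oracle_phase c p R oa (c_next c p).+1 false (received_knowledge c p R) (c_ans c p)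
     (c_query c) (c_sent c)
| PhaseQuery : ~~ c_wait c p -> c_next c p < n.+1 -> c_next c p != p ->
   let l := inord (c_next c p) in
   oracle_phase c p R oa (c_next c p) true (received_knowledge c p R) (c_ans c p)
     (upd (c_query c) l (upd (c_query c l) p (Some (V p)))) (c_sent c)
| PhaseDone : ~~ c_wait c p -> n.+1 <= c_next c p ->
   oracle_phase c p R oa (c_next c p) false (received_knowledge c p R) (c_ans c p)
     (c_query c) (c_sent c).

Lemma stepP c p R oa : exists nx wt kn an qu se,
  oracle_phase c p R oa nx wt kn an qu se /\
  step V d c p R oa = step_with c p nx wt kn an qu se.
Proof.
rewrite /step; case: (boolP (c_wait c p)) => w.
  case: (boolP oa) => o; do 6 eexists; split; [exact: PhaseResponse | by [] |
                                               exact: PhasePending | by []].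
case: (ltnP (c_next c p) n.+1) => lt; last first.
  by do 6 eexists; split; [exact: PhaseDone | by []].
case: (eqVneq (c_next c p) p) => e; do 6 eexists; split;
  [exact: PhaseSkipOwn | by [] | exact: PhaseQuery | by []].
Qed.
End Step.

Section Invariant.
Variables (n : nat) (V d : 'I_n.+1 -> bool).
Notation P := 'I_n.+1.

Record invariant (c : config n) : Prop := {
  inv_next : forall p, c_next c p <= n.+1;
  inv_wait : forall p, c_wait c p -> c_next c p < n.+1 /\ c_next c p != p;
  inv_wait_query : forall p, c_wait c p -> c_query c (inord (c_next c p)) p != None;
  inv_past : forall p (l : P), l < c_next c p -> l != p ->
    [/\ c_query c l p != None, c_ans c p l != None & c_know c p l != None];
  inv_query : forall l q b, c_query c l q = Some b -> b = V q;
  inv_sent : forall x l w, (x, l, w) \in c_sent c -> w = d l /\ answered (c_ans c) l;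
  inv_ans : forall p l w, c_ans c p l = Some w ->
    w = d l /\ forall x, (x, l, w) \in c_sent c;
  inv_know : forall p l w, c_know c p l = Some w -> w = d l /\ answered (c_ans c) l;
  inv_dec : forall p b, c_dec c p = Some b ->
    b = [exists l, d l] /\ forall l, answered (c_ans c) l }.

Record grows (c c' : config n) : Prop := {
  grows_next : forall p, c_next c p <= c_next c' p;
  grows_query : forall l q b, c_query c l q = Some b -> c_query c' l q = Some b;
  grows_sent : c_sent c \subset c_sent c';
  grows_dec : forall p b, c_dec c p = Some b -> c_dec c' p = Some b }.

Lemma grows_refl (c : config n) : grows c c.
Proof. by split. Qed.

Lemma grows_trans (c1 c2 c3 : config n) : grows c1 c2 -> grows c2 c3 -> grows c1 c3.
Proof.
move=> [n1 q1 s1 d1] [n2 q2 s2 d2]; split.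
- by move=> p; apply: leq_trans (n1 p) (n2 p).
- by move=> *; apply: q2; apply: q1.
- exact: subset_trans s1 s2.
- by move=> *; apply: d2; apply: d1.
Qed.

Record phase_post (c : config n) p nx (wt : bool) (kn an : P -> option bool)
    (qu : P -> P -> option bool) (se : {set P * P * bool}) : Prop := {
  post_next : c_next c p <= nx <= n.+1;
  post_wait : wt -> [/\ nx < n.+1, nx != p & qu (inord nx) p != None];
  post_past : forall l : P, l < nx -> l != p ->
    [/\ qu l p != None, an l != None & kn l != None];
  post_query : forall l q b, c_query c l q = Some b -> qu l q = Some b;
  post_queryV : forall l q b, qu l q = Some b -> b = V q;
  post_sent : c_sent c \subset se;
  post_sentV : forall x l w, (x, l, w) \in se -> w = d l /\ answered (upd (c_ans c) p an) l;
  post_ans : forall l w, c_ans c p l = Some w -> an l = Some w;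
  post_ansV : forall l w, an l = Some w -> w = d l /\ forall x, (x, l, w) \in se;
  post_knowV : forall l w, kn l = Some w -> w = d l /\ answered (upd (c_ans c) p an) l }.

Lemma received_knowledge_ext (c : config n) p R l :
  c_know c p l != None -> received_knowledge c p R l != None.
Proof. by rewrite /received_knowledge; case: (c_know c p l). Qed.

Lemma received_knowledgeV (c : config n) p R l w :
  invariant c -> received_knowledge c p R l = Some w -> w = d l /\ answered (c_ans c) l.
Proof.
move=> I; rewrite /received_knowledge; case E: (c_know c p l) => [w'|].
  by move=> [<-]; apply: inv_know I _ _ _ E.
case: ifP => [/setIP [_ H] [<-]|_]; first exact: inv_sent I _ _ _ H.
by case: ifP => [/setIP [_ H] [<-]|_] //; apply: inv_sent I _ _ _ H.
Qed.

Lemma phase_post_idle (c : config n) p R nx (wt : bool) :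
  invariant c -> c_next c p <= nx <= n.+1 ->
  (wt -> [/\ nx < n.+1, nx != p & c_query c (inord nx) p != None]) ->
  (forall l : P, l < nx -> l != p -> l < c_next c p) ->
  phase_post c p nx wt (received_knowledge c p R) (c_ans c p) (c_query c) (c_sent c).
Proof.
move=> I Hn Hw Hl; have keep := answered_upd (fun l w (E : c_ans c p l = Some w) => E).
split => //.
- move=> l /Hl lt lp; have [? ? /(received_knowledge_ext R) ?] := inv_past I (lt lp) lp.
  by split.
- exact: inv_query I.
- by move=> x l w /(inv_sent I) [-> /keep].
- by move=> l w /(inv_ans I).
- by move=> l w /(received_knowledgeV I) [-> /keep].
Qed.

Lemma phase_post_response (c : config n) p R : invariant c -> c_wait c p ->
  let l0 : P := inord (c_next c p) in
  phase_post c p (c_next c p).+1 false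
    (upd (received_knowledge c p R) l0 (Some (d l0))) (upd (c_ans c p) l0 (Some (d l0)))
    (c_query c) (c_sent c :|: [set (q, l0, d l0) | q : P]).
Proof.
move=> I w l0; have [lt np] := inv_wait I w.
have l0E : (l0 : nat) = c_next c p by rewrite inordK.
have ext : forall l w, c_ans c p l = Some w -> upd (c_ans c p) l0 (Some (d l0)) l = Some w.
  move=> l v E; rewrite /upd; case: eqP => [El|//].
  by have [-> _] := inv_ans I E; rewrite El.
have keep := answered_upd ext.
have new : answered (upd (c_ans c) p (upd (c_ans c p) l0 (Some (d l0)))) l0.
  by exists p; rewrite !upd_same.
split => //.
- by rewrite leqnSn.
- move=> l; rewrite ltnS leq_eqVlt => /orP [/eqP lE|lt'] lp.
    have -> : l = l0 by apply: val_inj; rewrite /= l0E.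
    by rewrite !upd_same; split => //; apply: inv_wait_query I _ w.
  have [? ? /(received_knowledge_ext R) ?] := inv_past I lt' lp.
  by split => //; apply: upd_Some_neq_None.
- exact: inv_query I.
- exact: subsetUl.
- by move=> x l v /setUP [/(inv_sent I) [-> /keep]|/imsetP [q _ [_ -> ->]]].
- move=> l v; rewrite /upd; case: eqP => [-> [<-]|_ E].
    by split => // x; apply/setUP; right; apply/imsetP; exists x.
  by have [-> H] := inv_ans I E; split => // x; apply/setUP; left.
- move=> l v; case: (eqVneq l l0) => [->|ne]; first by rewrite upd_same => -[<-].
  by rewrite upd_other // => /(received_knowledgeV I) [-> /keep].
Qed.

Lemma phase_post_stay (c : config n) p R (wt : bool) : invariant c -> wt ==> c_wait c p ->
  phase_post c p (c_next c p) wt (received_knowledge c p R) (c_ans c p)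
    (c_query c) (c_sent c).
Proof.
move=> I /implyP w; apply: phase_post_idle => //; first by rewrite leqnn (inv_next I).
by move=> /w wp; have [? ?] := inv_wait I wp; split => //; apply: inv_wait_query.
Qed.

Lemma phase_post_query (c : config n) p R : invariant c ->
  c_next c p < n.+1 -> c_next c p != p ->
  let l0 : P := inord (c_next c p) in
  phase_post c p (c_next c p) true (received_knowledge c p R) (c_ans c p)
    (upd (c_query c) l0 (upd (c_query c l0) p (Some (V p)))) (c_sent c).
Proof.
move=> I lt np l0.
case: (@phase_post_stay c p R false I isT) => nxt _ idle _ _ sent sentV ans ansV knowV.
split => //.
- by move=> _; rewrite !upd_same.
- move=> l lt' lp; have [? ? ?] := idle l lt' lp.
  by split => //; case: (eqVneq l l0) => [->|ne]; [rewrite !upd_same | rewrite upd_other].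
- move=> l q b E; case: (eqVneq l l0) => [El|ne]; last by rewrite upd_other.
  rewrite El upd_same; case: (eqVneq q p) => [Eq|qp]; last by rewrite upd_other // -El.
  by rewrite Eq upd_same (inv_query I E) Eq.
- move=> l q b; case: (eqVneq l l0) => [->|ne]; last first.
    by rewrite upd_other //; apply: inv_query.
  rewrite upd_same; case: (eqVneq q p) => [->|qp]; first by rewrite upd_same => -[<-].
  by rewrite upd_other //; apply: inv_query.
Qed.

Lemma oracle_phase_post (c : config n) p R oa nx wt kn an qu se : invariant c ->
  oracle_phase V d c p R oa nx wt kn an qu se -> phase_post c p nx wt kn an qu se.
Proof.
move=> I; case.
- by move=> w _; apply: phase_post_response.
- by move=> w _; apply: phase_post_stay; rewrite ?w.
- move=> _ lt e; apply: phase_post_idle => //; first by rewrite leqnSn.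
  move=> l; rewrite ltnS leq_eqVlt e => /orP [/eqP El|//] lp.
  by case/eqP: lp; apply: val_inj.
- by move=> _; apply: phase_post_query.
- by move=> _ _; apply: phase_post_stay.
Qed.

Lemma step_with_grows (c : config n) p nx wt kn an qu se :
  phase_post c p nx wt kn an qu se -> grows c (step_with c p nx wt kn an qu se).
Proof.
move=> post; split => /= [q|||q b E].
- case: (eqVneq q p) => [->|qp]; last by rewrite upd_other.
  by rewrite upd_same; case/andP: (post_next post).
- exact: post_query post.
- exact: post_sent post.
- case: (eqVneq q p) => [Eq|qp]; last by rewrite upd_other.
  by rewrite Eq upd_same -Eq E !andbF.
Qed.

Lemma step_with_dec (c : config n) p nx wt kn an qu se b :
  invariant c -> phase_post c p nx wt kn an qu se ->
  c_dec (step_with c p nx wt kn an qu se) p = Some b ->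
  b = [exists l, d l] /\ forall l, answered (upd (c_ans c) p an) l.
Proof.
move=> I post; have keep := answered_upd (post_ans post).
rewrite /= upd_same; case: ifP => [/and4P [_ _ /forallP known _] [<-]|_]; last first.
  by move=> /(inv_dec I) [-> H]; split => // l; apply: keep.
have knd : forall l, kn l = Some (d l).
  by move=> l; move: (known l); case E: (kn l) => [w|] // _; rewrite -(post_knowV post E).1.
split; last by move=> l; have [] := post_knowV post (knd l).
apply/existsP/existsP => -[l Hl]; exists l; first by move: Hl; rewrite knd => /eqP [].
by rewrite knd Hl.
Qed.

Lemma step_with_inv (c : config n) p nx wt kn an qu se :
  invariant c -> phase_post c p nx wt kn an qu se ->
  invariant (step_with c p nx wt kn an qu se).
Proof.
move=> I post; have keep := answered_upd (post_ans post).
have qN l q : c_query c l q != None -> qu l q != None.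
  by case E: (c_query c l q) => [b|] // _; rewrite (post_query post E).
split => /= [q|q|q|q l|||q l w|q l w|q b].
- case: (eqVneq q p) => [->|qp]; last by rewrite upd_other // (inv_next I).
  by rewrite upd_same; case/andP: (post_next post).
- case: (eqVneq q p) => [->|qp]; first by rewrite !upd_same => /(post_wait post) [].
  by rewrite !upd_other //; apply: inv_wait I q.
- case: (eqVneq q p) => [->|qp]; first by rewrite !upd_same => /(post_wait post) [].
  by rewrite !upd_other // => /(inv_wait_query I) /qN.
- case: (eqVneq q p) => [->|qp]; first by rewrite !upd_same; apply: post_past post l.
  by rewrite !upd_other // => lt lq; case: (inv_past I lt lq) => /qN.
- exact: post_queryV post.
- exact: post_sentV post.
- case: (eqVneq q p) => [->|qp]; first by rewrite upd_same => /(post_ansV post).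
  rewrite upd_other // => /(inv_ans I) [-> H]; split => // x.
  exact: subsetP (post_sent post) _ (H x).
- case: (eqVneq q p) => [->|qp]; first by rewrite upd_same => /(post_knowV post).
  by rewrite upd_other // => /(inv_know I) [-> /keep].
- case: (eqVneq q p) => [->|qp]; first exact: step_with_dec I post.
  by rewrite upd_other // => /(inv_dec I) [-> H]; split => // l; apply: keep.
Qed.

Lemma step_inv (c : config n) p R oa : invariant c ->
  invariant (step V d c p R oa) /\ grows c (step V d c p R oa).
Proof.
move=> I; have [nx [wt [kn [an [qu [se [ph ->]]]]]]] := stepP V d c p R oa.
have post := oracle_phase_post I ph.
by split; [apply: step_with_inv | apply: step_with_grows].
Qed.

Lemma invariant_init : invariant (init n).
Proof. by split => //= x l w; rewrite in_set0. Qed.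
End Invariant.

Section StepProgress.
Variables (n : nat) (V d : 'I_n.+1 -> bool).
Notation P := 'I_n.+1.
Implicit Types (c : config n) (p q : P) (R : {set P * P * bool}) (oa : bool).

Lemma step_other c p q R oa : q != p ->
  c_next (step V d c q R oa) p = c_next c p /\ c_wait (step V d c q R oa) p = c_wait c p.
Proof.
move=> qp; have [nx [wt [kn [an [qu [se [_ ->]]]]]]] := stepP V d c q R oa.
by rewrite /= !upd_other // eq_sym.
Qed.

Lemma step_waiting c p R oa : c_wait c p ->
  if oa then c_next (step V d c p R oa) p = (c_next c p).+1
  else c_next (step V d c p R oa) p = c_next c p /\ c_wait (step V d c p R oa) p.
Proof.
move=> w; have [nx [wt [kn [an [qu [se [ph ->]]]]]]] := stepP V d c p R oa.
case: ph => [_ ->|_ /negbTE ->|w'|w'|w']; rewrite /= ?upd_same //.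
all: by rewrite w in w'.
Qed.

Lemma step_idle c p R oa : ~~ c_wait c p -> c_next c p < n.+1 ->
  if c_next c p == p :> nat then c_next (step V d c p R oa) p = (c_next c p).+1
  else c_next (step V d c p R oa) p = c_next c p /\ c_wait (step V d c p R oa) p.
Proof.
move=> w lt; have [nx [wt [kn [an [qu [se [ph ->]]]]]]] := stepP V d c p R oa.
case: ph => [w'|w'|_ _ ->|_ _ /negbTE ->|_ ge]; rewrite /= ?upd_same ?eqxx //.
- by rewrite w' in w.
- by rewrite w' in w.
- by rewrite leqNgt lt in ge.
Qed.

Lemma step_decides c p R oa w : invariant V d c -> c_next c p = n.+1 ->
  (p, p, w) \in R :&: c_sent c -> c_dec (step V d c p R oa) p != None.
Proof.
move=> I at_end msg.
have w0 : ~~ c_wait c p by apply/negP => /(inv_wait I) []; rewrite at_end ltnn.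
have [nx [wt [kn [an [qu [se [ph ->]]]]]]] := stepP V d c p R oa.
case: ph => [w' _|w' _|_ lt _|_ lt _|_ _]; try by rewrite ?w' in w0.
  1,2: by rewrite at_end ltnn in lt.
rewrite /= upd_same; case: (c_dec c p) => [b|]; first by case: ifP.
rewrite at_end leqnn /= andbT; case: ifP => // /negbT/negP[]; apply/forallP => l.
case: (eqVneq l p) => [->|lp].
  rewrite /received_knowledge; case: (c_know c p p) => //.
  by case: ifP => // t; case: ifP => // f; case: w msg; rewrite ?t ?f.
apply: received_knowledge_ext.
have lt_l : (l : nat) < c_next c p by rewrite at_end ltn_ord.
by have [] := inv_past I lt_l lp.
Qed.
End StepProgress.

Section Run.
Variables (n f k : nat) (V : 'I_n.+1 -> bool) (F : nat -> {set 'I_n.+1})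
  (d : 'I_n.+1 -> bool) (sched : nat -> option 'I_n.+1)
  (rcv : nat -> {set 'I_n.+1 * 'I_n.+1 * bool}) (oans : nat -> bool)
  (conf : nat -> config n).
Notation P := 'I_n.+1.
Hypothesis run_conf : run f k V F d sched rcv oans conf.
Hypothesis faulty_le : forall t, #|F t| <= f.

Lemma conf_succ t : conf t.+1 =
  if sched t is Some p then step V d (conf t) p (rcv t) (oans t) else conf t.
Proof. by case: run_conf => _ [_ [H _]]; apply: H. Qed.

Lemma faulty_mono t t' : t <= t' -> F t \subset F t'.
Proof.
case: run_conf => Fsucc _; elim: t' => [|t' IH]; first by rewrite leqn0 => /eqP ->.
rewrite leq_eqVlt => /orP [/eqP ->|/IH sub]; first exact: subxx.
exact: subset_trans sub (Fsucc t').
Qed.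

Lemma fair p : correct F p -> forall t, exists2 t', t <= t' & sched t' = Some p.
Proof. by case: run_conf => _ [_ [_ [_ [H _]]]]; apply: H. Qed.

Lemma reliable p l w t : correct F p -> (p, l, w) \in c_sent (conf t) ->
  exists2 t', t <= t' & sched t' = Some p /\ (p, l, w) \in rcv t'.
Proof. by case: run_conf => _ [_ [_ [_ [_ [H _]]]]]; apply: H. Qed.

Lemma oracle_live p t : correct F p -> c_wait (conf t) p ->
  (exists t0,
     n - f <= #|[set q | c_query (conf t0) (inord (c_next (conf t) p)) q != None]|) ->
  exists2 t', t <= t' & sched t' = Some p /\ oans t'.
Proof. by case: run_conf => _ [_ [_ [_ [_ [_ [H _]]]]]]; apply: H. Qed.

Lemma oracle_safe l : (exists t p, c_ans (conf t) p l != None) ->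
  forall W : P -> bool, (forall q t b, c_query (conf t) l q = Some b -> W q = b) ->
  kTAg k [set~ l] F W (d l).
Proof. by case: run_conf => _ [_ [_ [_ [_ [_ [_ H]]]]]]; apply: H. Qed.

Lemma invariant_conf t : invariant V d (conf t).
Proof.
elim: t => [|t I]; first by case: run_conf => _ [-> _]; apply: invariant_init.
by rewrite conf_succ; case: (sched t) => [p|] //; apply: (step_inv _ _ _ I).1.
Qed.

Lemma grows_conf t t' : t <= t' -> grows (conf t) (conf t').
Proof.
elim: t' => [|t' IH]; first by rewrite leqn0 => /eqP ->; apply: grows_refl.
rewrite leq_eqVlt => /orP [/eqP ->|/IH g]; first exact: grows_refl.
apply: grows_trans g _; rewrite conf_succ; case: (sched t') => [p|]; last exact: grows_refl.
exact: (step_inv _ _ _ (invariant_conf t')).2.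
Qed.

Lemma eventually_crashed_or (Q : nat -> P -> Prop) :
  (forall t t' q, t <= t' -> Q t q -> Q t' q) ->
  (forall q, correct F q -> exists t, Q t q) ->
  exists t, forall q, q \in F t \/ Q t q.
Proof.
move=> Qmono Qcorrect; apply: monotone_eventually_forall.
  move=> t t' q le [crashed|]; last by right; apply: Qmono le _.
  by left; apply: subsetP (faulty_mono le) _ crashed.
move=> q; case: (classic (correct F q)) => [/Qcorrect [t Qt]|]; first by exists t; right.
by move=> /not_all_ex_not [t /negP /negbNE crashed]; exists t; left.
Qed.

Lemma waiting_persists p j t : c_next (conf t) p = j -> c_wait (conf t) p ->
  forall t', t <= t' ->
  (c_next (conf t') p = j /\ c_wait (conf t') p) \/ j < c_next (conf t') p.
Proof.
move=> nj w; elim => [|t' IH]; first by rewrite leqn0 => /eqP <-; left.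
rewrite leq_eqVlt => /orP [/eqP <-|]; first by left.
rewrite ltnS => /IH [[nj' w']|lt]; last first.
  by right; apply: leq_trans lt (grows_next (grows_conf (leqnSn t')) p).
rewrite conf_succ; case: (sched t') => [q|]; last by left.
case: (eqVneq q p) => [->|qp]; last first.
  by have [-> ->] := step_other V d (conf t') (rcv t') (oans t') qp; left.
have := step_waiting V d (rcv t') (oans t') w'; case: (oans t') => [->|[-> ->]].
  by right; rewrite nj'.
by left.
Qed.

Lemma reach_query p j t : correct F p -> j < n.+1 -> j != p -> j <= c_next (conf t) p ->
  exists t1, (c_next (conf t1) p = j /\ c_wait (conf t1) p) \/ j < c_next (conf t1) p.
Proof.
move=> cp jn jp; rewrite leq_eqVlt => /orP [/eqP nj|lt]; last by exists t; right.
have [t' tt' sp] := fair cp t.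
have := grows_next (grows_conf tt') p; rewrite -nj leq_eqVlt => /orP [/eqP nj'|lt];
  last by exists t'; right.
case w: (c_wait (conf t') p); first by exists t'; left.
exists t'.+1; left; rewrite conf_succ sp.
have lt' : c_next (conf t') p < n.+1 by rewrite -nj'.
by have := step_idle V d (rcv t') (oans t') (negbT w) lt'; rewrite -nj' (negbTE jp).
Qed.

Lemma passes_round p j t : correct F p -> j < n.+1 ->
  (exists t0, n - f <= #|[set q | c_query (conf t0) (inord j) q != None]|) ->
  j <= c_next (conf t) p -> exists t', j < c_next (conf t') p.
Proof.
move=> cp jn quorum le; case: (eqVneq j (p : nat)) => [jp|jp].
  have [t' tt' sp] := fair cp t.
  have := leq_trans le (grows_next (grows_conf tt') p).
  rewrite leq_eqVlt => /orP [/eqP nj|]; last by exists t'.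
  have w : ~~ c_wait (conf t') p.
    by apply/negP => /(inv_wait (invariant_conf t')) [_]; rewrite -nj jp eqxx.
  have lt : c_next (conf t') p < n.+1 by rewrite -nj.
  exists t'.+1; rewrite conf_succ sp.
  by have := step_idle V d (rcv t') (oans t') w lt; rewrite -nj jp eqxx => ->.
have [t1 [[nj w]|lt]] := reach_query cp jn jp le; last by exists t1.
rewrite -nj in quorum; have [t2 t12 [sp ans]] := oracle_live cp w quorum.
have [[nj2 w2]|lt] := waiting_persists nj w t12; last by exists t2.
exists t2.+1; rewrite conf_succ sp.
by have := step_waiting V d (rcv t2) (oans t2) w2; rewrite ans nj2 => ->.
Qed.

Lemma query_persists t t' l q : t <= t' ->
  c_query (conf t) l q != None -> c_query (conf t') l q != None.
Proof.
by move=> le; case E: (c_query _ l q) => [b|] // _; rewrite (grows_query (grows_conf le) E).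
Qed.

Lemma correct_queries q j t : correct F q -> j < n.+1 -> j != q ->
  j <= c_next (conf t) q -> exists t1, c_query (conf t1) (inord j) q != None.
Proof.
move=> cq jn jq le; have jE : (inord j : P) = j :> nat by rewrite inordK.
have [t1 [[nj w]|lt]] := reach_query cq jn jq le; exists t1.
  by have := inv_wait_query (invariant_conf t1) w; rewrite nj.
rewrite -jE in lt; have [] // := inv_past (invariant_conf t1) lt.
by apply: contra jq => /eqP <-; rewrite jE.
Qed.

Lemma oracle_quorum j : j < n.+1 ->
  (forall p, correct F p -> exists t, j <= c_next (conf t) p) ->
  exists t0, n - f <= #|[set q | c_query (conf t0) (inord j) q != None]|.
Proof.
move=> jn reached; set l0 : P := inord j.
have [T HT] : exists T, forall q,
    q \in F T \/ q = l0 \/ c_query (conf T) l0 q != None.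
  apply: eventually_crashed_or.
- by move=> t t' q le [->|]; [left | right; apply: query_persists le _].
- move=> q cq; case: (eqVneq q l0) => [->|ql0]; first by exists 0; left.
  have jq : j != q by apply: contra ql0 => /eqP jq; rewrite /l0 jq inord_val.
  have [t le] := reached q cq; have [t1 ?] := correct_queries cq jn jq le.
  by exists t1; right.
exists T; set Q := [set q | _].
have sub : ~: F T :\ l0 \subset Q.
  apply/subsetP => q; rewrite !inE => /andP [ql0 alive].
  case: (HT q) => [crashed|[ql0'|//]]; first by rewrite crashed in alive.
  by rewrite ql0' eqxx in ql0.
have := subset_leq_card sub; have := leq_cardsD1 (~: F T) l0; have := faulty_le T.
have := cardsC (F T); rewrite card_ord.
(* generalizing first: [lia] would see two elaborations of [#|F T|] as distinct atoms *)
move: #|F T| #|~: F T| #|~: F T :\ l0| #|Q|; lia.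
Qed.

Lemma completes_loop j : j <= n.+1 ->
  forall p, correct F p -> exists t, j <= c_next (conf t) p.
Proof.
elim: j => [|j IH] jn p cp; first by exists 0.
have reached := IH (ltnW jn); have [t le] := reached p cp.
exact: passes_round cp jn (oracle_quorum jn reached) le.
Qed.

Lemma exists_other_correct p : 1 <= f <= n - 1 -> exists2 q, q != p & correct F q.
Proof.
move=> fn; apply: NNPP => none.
have [T HT] : exists T, forall q, q \in F T \/ q = p.
  apply: eventually_crashed_or => [t t' q _ //|q cq].
  by exists 0; apply: NNPP => qp; apply: none; exists q; first apply/eqP.
have sub : [set~ p] \subset F T.
  by apply/subsetP => q; rewrite !inE => qp; case: (HT q) => // /eqP; rewrite (negbTE qp).
by have := leq_trans (subset_leq_card sub) (faulty_le T); rewrite cardsC1 card_ord /=; lia.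
Qed.

Lemma termination p : 1 <= f <= n - 1 -> correct F p -> exists t, c_dec (conf t) p != None.
Proof.
move=> fn cp; have [t1 end1] := completes_loop (leqnn n.+1) cp.
have [q qp cq] := exists_other_correct p fn.
have [t2 end2] := completes_loop (leqnn n.+1) cq.
have [w ans] : exists w, c_ans (conf t2) q p = Some w.
  have lt : (p : nat) < c_next (conf t2) q by apply: leq_trans (ltn_ord p) end2.
  have pq : p != q by rewrite eq_sym.
  have [_ + _] := inv_past (invariant_conf t2) lt pq.
  by case: (c_ans _ q p) => [w|] // _; exists w.
have sent : (p, p, w) \in c_sent (conf (maxn t1 t2)).
  apply: subsetP (grows_sent (grows_conf (leq_maxr t1 t2))) _ _.
  exact: (inv_ans (invariant_conf t2) ans).2.
have [t' le [sp rcvd]] := reliable cp sent.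
have at_end : c_next (conf t') p = n.+1.
  apply/eqP; rewrite eqn_leq (inv_next (invariant_conf t')).
  exact: leq_trans end1 (grows_next (grows_conf (leq_trans (leq_maxl t1 t2) le)) p).
have msg : (p, p, w) \in rcv t' :&: c_sent (conf t').
  by apply/setIP; split => //; apply: subsetP (grows_sent (grows_conf le)) _ sent.
by exists t'.+1; rewrite conf_succ sp; apply: step_decides (invariant_conf t') at_end msg.
Qed.

Lemma validity p t b : 1 <= k -> c_dec (conf t) p = Some b -> kTAg k.+1 [set: P] F V b.
Proof.
move=> k_gt0 /(inv_dec (invariant_conf t)) [-> answered_all].
apply: (kTAg_max_of_removals k_gt0 faulty_mono) => l.
apply: oracle_safe => [|q t' b' /(inv_query (invariant_conf t')) //].
by have [q ?] := answered_all l; exists t, q.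
Qed.
End Run.

Theorem mainTheorem7 (n f k : nat) :
  1 <= f <= n - 1 -> 1 <= k <= n ->
  forall (V : 'I_n.+1 -> bool) (F : nat -> {set 'I_n.+1}) (d : 'I_n.+1 -> bool)
         (sched : nat -> option 'I_n.+1) (rcv : nat -> {set 'I_n.+1 * 'I_n.+1 * bool})
         (oans : nat -> bool) (conf : nat -> config n),
  (forall t, #|F t| <= f) ->
  run f k V F d sched rcv oans conf ->
  solves_in_run k.+1 V F conf.
Proof.
move=> fn /andP [k_gt0 _] V F d sched rcv oans conf faulty_le r.
have I := invariant_conf r.
split.
- by move=> p; apply: (termination r faulty_le fn).
- by move=> p t b; apply: (grows_dec (grows_conf r (leqnSn t))).
- by move=> p q t t' b b' /(inv_dec (I t)) [-> _] /(inv_dec (I t')) [-> _].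
- by move=> p t b; apply: (validity r k_gt0).
Qed.
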